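(* Let $k\ge 1$ and let $G$ be a graph of order $n$ with minimum degree $\delta\ge k+1$. Then $\Gamma_{\times k,t}(G)\le n-\delta+k$. Moreover the bound is sharp: for all integers $\delta\ge k+1\ge 2$ and $b\ge\lceil \delta/(k+1)\rceil$, the join $G_b=H_b\vee T$, where $H_b$ is the disjoint union of $b$ copies of $K_{k+1}$ and $T$ is an edgeless graph on $\delta-k$ vertices, has minimum degree $\delta$, order $n=b(k+1)+\delta-k$, and $\Gamma_{\times k,t}(G_b)=n-\delta+k$.
   Context: A set $S\subseteq V(G)$ is a $k$-tuple total dominating set ($k$TDS) of a graph $G$ with $\delta(G)\ge k$ if $|N_G(x)\cap S|\ge k$ for every $x\in V(G)$. The upper $k$-tuple total domination number $\Gamma_{\times k,t}(G)$ is the maximum cardinality of a minimal (with respect to inclusion) $k$TDS of $G$. The join $A\vee B$ of disjoint graphs is their union together with all edges between $V(A)$ and $V(B)$. *)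

(* Simple graphs = symmetric irreflexive relations on a finType. *)
From mathcomp Require Import all_boot.
Set Implicit Arguments. Unset Strict Implicit. Unset Printing Implicit Defensive.

Section Graphs.
Variable T : finType.
Implicit Types (e : rel T) (S : {set T}).

Definition nbhd e (x : T) : {set T} := [set y | e x y].
Definition deg e (x : T) : nat := #|nbhd e x|.
(* minimum degree delta(G); the default #|T| is irrelevant for nonempty T,
   since every degree is < #|T| *)
Definition mindeg e : nat := \big[minn/#|T|]_(x : T) deg e x.

Definition is_kTDS (k : nat) e S : bool :=
  [forall x : T, k <= #|nbhd e x :&: S|].
Definition is_minimal_kTDS (k : nat) e S : bool :=
  is_kTDS k e S && [forall S' : {set T}, (S' \proper S) ==> ~~ is_kTDS k e S'].
Definition upper_ktdom (k : nat) e : nat :=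
  \max_(S : {set T} | is_minimal_kTDS k e S) #|S|.
End Graphs.

Definition join_rel (A B : finType) (eA : rel A) (eB : rel B) : rel (A + B) :=
  fun u v => match u, v with
             | inl a, inl a' => eA a a'
             | inr b, inr b' => eB b b'
             | _, _ => true
             end.
Definition copies_rel (I : finType) {A : finType} (e : rel A) : rel (I * A) :=
  fun u v => (u.1 == v.1) && e u.2 v.2.
Definition complete_rel (m : nat) : rel 'I_m := fun a c => a != c.
Definition edgeless_rel (m : nat) : rel 'I_m := fun _ _ => false.

Definition Gb_vert (k d b : nat) : finType := (('I_b * 'I_k.+1) + 'I_(d - k))%type.
Definition Gb_rel (k d b : nat) : rel (Gb_vert k d b) :=
  join_rel (@copies_rel 'I_b _ (@complete_rel k.+1)) (@edgeless_rel (d - k)).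

Definition ceil_div (m d : nat) : nat := (m + d.-1) %/ d.
Arguments Gb_rel k d b : clear implicits.
Arguments Gb_vert k d b : clear implicits.

From mathcomp Require Import all_boot zify.

Set Implicit Arguments.
Unset Strict Implicit.
Unset Printing Implicit Defensive.

(* Upper bound: if S is a minimal kTDS and v \in S, then S :\ v fails at some
   vertex x, so x has at most k neighbours in S and at least deg x - k outside
   S; hence |S| <= n - deg x + k.
   Sharpness: in G_b the vertex set H_b of the cliques is a kTDS, and it is
   minimal because each of its vertices is adjacent to a vertex of the same
   clique having exactly k neighbours in H_b. *)

Lemma bigmin_le (I : eqType) (s : seq I) (F : I -> nat) (n : nat) (x : I) :
  x \in s -> \big[minn/n]_(y <- s) F y <= F x.
Proof.
elim: s => [//|y s IHs]; rewrite inE big_cons => /orP[/eqP<-|/IHs le_x].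
  exact: geq_minl.
by rewrite geq_min le_x orbT.
Qed.

Section Graphs.
Variables (T : finType) (e : rel T) (k : nat).

Lemma mindeg_le (x : T) : mindeg e <= deg e x.
Proof. by apply: bigmin_le; rewrite mem_index_enum. Qed.

Lemma mindeg_eq (d : nat) (x0 : T) :
  (forall x, d <= deg e x) -> deg e x0 = d -> mindeg e = d.
Proof.
move=> deg_ge deg_x0; apply/eqP; rewrite eqn_leq -{1}deg_x0 mindeg_le /=.
apply: (big_ind (fun m => d <= m)) => // [|m m' ? ?]; last by rewrite leq_min; apply/andP.
by rewrite -deg_x0 max_card.
Qed.

Lemma deg_le_nbhdI_compl (S : {set T}) (x : T) :
  deg e x <= #|nbhd e x :&: S| + (#|T| - #|S|).
Proof.
rewrite /deg -(cardsID S (nbhd e x)) leq_add2l -(cardsC S) addKn.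
by apply/subset_leq_card/subsetP => y; rewrite !inE => /andP[].
Qed.

Lemma minimal_kTDS_tight (S : {set T}) (v : T) :
  is_minimal_kTDS k e S -> v \in S -> exists x, #|nbhd e x :&: S| <= k.
Proof.
move=> /andP[_ /forallP/(_ (S :\ v))] + vS; rewrite properD1 //= => /forallPn[x].
rewrite -ltnNge => lt_k; exists x.
have sub : nbhd e x :&: S \subset v |: (nbhd e x :&: (S :\ v)).
  by apply/subsetP => y; rewrite !inE; case: (y =P v).
by move: (subset_leq_card sub); rewrite cardsU1; lia.
Qed.

Lemma upper_ktdom_le : upper_ktdom k e <= #|T| - mindeg e + k.
Proof.
apply/bigmax_leqP => S minS.
have [->|[v vS]] := set_0Vmem S; first by rewrite cards0.
have [x le_k] := minimal_kTDS_tight minS vS.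
have := deg_le_nbhdI_compl S x; have := mindeg_le x; have := max_card S; lia.
Qed.

(* Dropping v from S leaves x with only k - 1 neighbours in S. *)
Lemma minimal_kTDS_of_tight (S : {set T}) :
  is_kTDS k e S ->
  (forall v, v \in S -> exists2 x, v \in nbhd e x & #|nbhd e x :&: S| = k) ->
  is_minimal_kTDS k e S.
Proof.
move=> kS tight; apply/andP; split=> //; apply/forallP => S'.
apply/implyP => /properP[subS' [v vS vS']]; apply/forallPn.
have [x vNx card_k] := tight v vS; exists x; rewrite -ltnNge.
have sub : nbhd e x :&: S' \subset (nbhd e x :&: S) :\ v.
  apply/subsetP => y; rewrite !inE => /andP[-> yS'].
  by rewrite (subsetP subS' y yS') !andbT; apply: contraNneq vS' => <-.
apply: (leq_ltn_trans (subset_leq_card sub)).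
by move: (cardsD1 v (nbhd e x :&: S)); rewrite inE vNx vS card_k; lia.
Qed.

End Graphs.

Lemma card_set_sum (A B : finType) (S : {set A + B}) :
  #|S| = #|inl @^-1: S| + #|inr @^-1: S|.
Proof.
rewrite -!sum1_card !big_mkcond big_sumType /=.
by congr (_ + _); rewrite [RHS]big_mkcond; apply: eq_bigr => i _; rewrite inE.
Qed.

Section Join.
Variables (A B : finType) (eA : rel A) (eB : rel B).
Local Notation E := (join_rel eA eB).

Lemma preim_inl_nbhd_join_inl a : inl @^-1: nbhd E (inl a) = nbhd eA a.
Proof. by apply/setP => x; rewrite !inE. Qed.

Lemma preim_inr_nbhd_join_inl a : inr @^-1: nbhd E (inl a) = setT.
Proof. by apply/setP => y; rewrite !inE. Qed.

Lemma preim_inl_nbhd_join_inr b : inl @^-1: nbhd E (inr b) = setT.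
Proof. by apply/setP => x; rewrite !inE. Qed.

Lemma preim_inr_nbhd_join_inr b : inr @^-1: nbhd E (inr b) = nbhd eB b.
Proof. by apply/setP => y; rewrite !inE. Qed.

Lemma deg_join_inl a : deg E (inl a) = deg eA a + #|B|.
Proof.
by rewrite /deg card_set_sum preim_inl_nbhd_join_inl preim_inr_nbhd_join_inl cardsT.
Qed.

Lemma deg_join_inr b : deg E (inr b) = #|A| + deg eB b.
Proof.
by rewrite /deg card_set_sum preim_inl_nbhd_join_inr preim_inr_nbhd_join_inr cardsT.
Qed.

Lemma card_setI_imset_inl (S : {set A + B}) :
  #|S :&: [set inl x | x : A]| = #|inl @^-1: S|.
Proof.
rewrite card_set_sum (_ : inr @^-1: _ = set0) ?cards0 ?addn0.
  by apply: eq_card => x; rewrite !inE imset_f ?andbT.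
by apply/setP => y; rewrite !inE; apply/negbTE; apply/andP => -[_ /imsetP[? _ //]].
Qed.

Lemma card_nbhd_join_inlI a : #|nbhd E (inl a) :&: [set inl x | x : A]| = deg eA a.
Proof. by rewrite card_setI_imset_inl preim_inl_nbhd_join_inl. Qed.

Lemma card_nbhd_join_inrI b : #|nbhd E (inr b) :&: [set inl x | x : A]| = #|A|.
Proof. by rewrite card_setI_imset_inl preim_inl_nbhd_join_inr cardsT. Qed.

End Join.

Lemma deg_copies (I A : finType) (e : rel A) (i : I) (a : A) :
  deg (copies_rel e) (i, a) = deg e a.
Proof.
have inj_pair : injective (pair i : A -> I * A) by move=> ? ? [].
rewrite /deg -(card_imset (nbhd e a) inj_pair); apply: eq_card => -[j c].
rewrite !inE /copies_rel /=; apply/andP/imsetP => [[/eqP<- ec]|[c' ec' [-> ->]]].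
  by exists c; rewrite ?inE.
by rewrite inE in ec'.
Qed.

Lemma deg_complete m (a : 'I_m) : deg (@complete_rel m) a = m.-1.
Proof.
rewrite /deg (_ : nbhd _ a = [set~ a]) ?cardsC1 ?card_ord //.
by apply/setP => c; rewrite !inE eq_sym.
Qed.

Lemma deg_edgeless m (a : 'I_m) : deg (@edgeless_rel m) a = 0.
Proof. by rewrite /deg (_ : nbhd _ a = set0) ?cards0 //; apply/setP => c; rewrite !inE. Qed.

Lemma leq_mul_of_ceil_div (n m b : nat) :
  0 < m -> ceil_div n m <= b -> n <= b * m.
Proof.
move=> m_gt0; rewrite /ceil_div => le_b.
by have := ltn_ceil (n + m.-1) m_gt0; nia.
Qed.

Section Gb.
Variables (k d b : nat).
Local Notation V := (Gb_vert k d b).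
Local Notation E := (Gb_rel k d b).

Definition Hb : {set V} := [set inl u | u : 'I_b * 'I_k.+1].

Lemma card_Gb_vert : #|V| = b * k.+1 + (d - k).
Proof. by rewrite card_sum card_prod !card_ord. Qed.

Lemma card_Hb : #|Hb| = b * k.+1.
Proof. by rewrite card_imset ?cardsT ?card_prod ?card_ord //; move=> ? ? []. Qed.

Lemma deg_Gb_inl u : deg E (inl u) = k + (d - k).
Proof. by case: u => i a; rewrite deg_join_inl deg_copies deg_complete card_ord. Qed.

Lemma deg_Gb_inr t : deg E (inr t) = b * k.+1.
Proof. by rewrite deg_join_inr deg_edgeless card_prod !card_ord addn0. Qed.

Lemma card_nbhd_Gb_inlI u : #|nbhd E (inl u) :&: Hb| = k.
Proof. by case: u => i a; rewrite card_nbhd_join_inlI deg_copies deg_complete. Qed.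

Lemma card_nbhd_Gb_inrI t : #|nbhd E (inr t) :&: Hb| = b * k.+1.
Proof. by rewrite card_nbhd_join_inrI card_prod !card_ord. Qed.

Hypotheses (k_gt0 : 0 < k) (b_gt0 : 0 < b).

Lemma minimal_kTDS_Hb : is_minimal_kTDS k E Hb.
Proof.
apply: minimal_kTDS_of_tight.
  by apply/forallP => -[u|t]; rewrite ?card_nbhd_Gb_inlI ?card_nbhd_Gb_inrI //; nia.
move=> _ /imsetP[[i a] _ ->].
have /card_gt0P[a' ] : 0 < #|[set~ a]| by rewrite cardsC1 card_ord.
rewrite !inE => neq_a'a.
exists (inl (i, a')); last exact: card_nbhd_Gb_inlI.
by rewrite inE /Gb_rel /join_rel /copies_rel /complete_rel /= eqxx.
Qed.

End Gb.

Theorem mainTheorem6 (k : nat) (hk : 1 <= k) :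
  (forall (T : finType) (e : rel T),
      symmetric e -> irreflexive e -> k.+1 <= mindeg e ->
      upper_ktdom k e <= #|T| - mindeg e + k)
  /\
  (forall d b : nat, k.+1 <= d -> ceil_div d k.+1 <= b ->
      mindeg (Gb_rel k d b) = d
      /\ #|Gb_vert k d b| = b * k.+1 + (d - k)
      /\ upper_ktdom k (Gb_rel k d b) = #|Gb_vert k d b| - d + k).
Proof.
split=> [T e _ _ _|d b lt_kd le_b]; first exact: upper_ktdom_le.
have le_d_Hb : d <= b * k.+1 := leq_mul_of_ceil_div (ltn0Sn k) le_b.
have b_gt0 : 0 < b by nia.
have mindeg_Gb : mindeg (Gb_rel k d b) = d.
  apply: (@mindeg_eq _ _ _ (inl (Ordinal b_gt0, ord0))) => [[u|t]|];
    rewrite ?deg_Gb_inl ?deg_Gb_inr; lia.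
do 2!split=> //; first exact: card_Gb_vert.
apply/eqP; rewrite eqn_leq; apply/andP; split.
  by move: (upper_ktdom_le (Gb_rel k d b) k); rewrite mindeg_Gb.
apply: leq_trans (leq_bigmax_cond _ (@minimal_kTDS_Hb k d b hk b_gt0)).
by rewrite card_Hb card_Gb_vert; lia.
Qed.
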